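(* Let $(X,d)$ be a complete metric space and let $T\colon X\to X$ be a mapping satisfying: (i) for every $\varepsilon>0$ there exists $\delta>0$ such that for all $x,y\in X$, $\frac{1}{2}\{d(x,Tx)+d(y,Ty)\}<\varepsilon+\delta$ implies $d(Tx,Ty)\le\varepsilon$; (ii) for all $x,y\in X$, $x\neq y$ implies $d(Tx,Ty)<\frac{1}{2}\{d(x,Tx)+d(y,Ty)\}$. Then $T$ has a unique fixed point. *)

From Stdlib Require Import Reals.
Open Scope R_scope.

Definition is_metric {X : Type} (d : X -> X -> R) : Prop :=
  (forall x y, 0 <= d x y) /\
  (forall x y, d x y = 0 <-> x = y) /\
  (forall x y, d x y = d y x) /\
  (forall x y z, d x z <= d x y + d y z).

Definition cauchy_seq {X : Type} (d : X -> X -> R) (u : nat -> X) : Prop :=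
  forall eps, 0 < eps -> exists N : nat,
    forall m n, (N <= m)%nat -> (N <= n)%nat -> d (u m) (u n) < eps.

Definition seq_converges_to {X : Type} (d : X -> X -> R) (u : nat -> X) (l : X) : Prop :=
  forall eps, 0 < eps -> exists N : nat, forall n, (N <= n)%nat -> d (u n) l < eps.

Definition complete_metric {X : Type} (d : X -> X -> R) : Prop :=
  forall u : nat -> X, cauchy_seq d u -> exists l, seq_converges_to d u l.

(** Take any orbit [T^n x].  Condition (ii) makes the displacements
    [d (T^n x) (T^(n+1) x)] nonincreasing; if their limit [l] were positive,
    condition (i) at level [l] would force a displacement equal to [l], and
    (ii) would push the next one strictly below [l].  So the displacements
    tend to [0], and then (i) bounds [d (T^(m+1) x) (T^(n+1) x)] for large
    [m], [n], so the orbit is Cauchy.  At its limit [z], (ii) gives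
    [d z (T z) <= 2 d z (T^(n+1) x) + 3 d (T^n x) (T^(n+1) x)], hence
    [T z = z]; and (ii) alone rules out a second fixed point. *)
From Stdlib Require Import Reals Lra Lia Classical.
Open Scope R_scope.

Section MetricFacts.

Context {X : Type} {d : X -> X -> R}.
Hypothesis metric_d : is_metric d.

Lemma dist_ge0 x y : 0 <= d x y.
Proof. apply metric_d. Qed.

Lemma dist_eq0 x y : d x y = 0 -> x = y.
Proof. apply metric_d. Qed.

Lemma dist_refl x : d x x = 0.
Proof. apply metric_d; reflexivity. Qed.

Lemma dist_sym x y : d x y = d y x.
Proof. apply metric_d. Qed.

Lemma dist_triangle x y z : d x z <= d x y + d y z.
Proof. apply metric_d. Qed.

End MetricFacts.

Lemma Un_cv0_eventually_lt {a : nat -> R} :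
  Un_cv a 0 -> forall eps, 0 < eps -> exists N, forall n, (N <= n)%nat -> a n < eps.
Proof.
  intros Ha eps Heps. destruct (Ha eps Heps) as [N HN]. exists N. intros n Hn.
  specialize (HN n Hn). unfold Rdist in HN. rewrite Rminus_0_r in HN.
  exact (Rle_lt_trans _ _ _ (Rle_abs _) HN).
Qed.

Section KannanMap.

Context {X : Type} {d : X -> X -> R} {T : X -> X}.
Hypothesis metric_d : is_metric d.
Hypothesis kannan_strict :
  forall x y, x <> y -> d (T x) (T y) < (d x (T x) + d y (T y)) / 2.

Definition displacement (x : X) : R := d x (T x).

Definition orbit (x : X) (n : nat) : X := Nat.iter n T x.

Lemma orbit_S x n : orbit x (S n) = T (orbit x n).
Proof. reflexivity. Qed.

Lemma displacement_ge0 x : 0 <= displacement x.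
Proof. apply (dist_ge0 metric_d). Qed.

Lemma kannan_le x y : d (T x) (T y) <= (displacement x + displacement y) / 2.
Proof.
  unfold displacement. destruct (classic (x = y)) as [<- | Hxy].
  - rewrite (dist_refl metric_d). pose proof (dist_ge0 metric_d x (T x)). lra.
  - apply Rlt_le, kannan_strict, Hxy.
Qed.

Lemma displacement_T_le x : displacement (T x) <= displacement x.
Proof. pose proof (kannan_le x (T x)). unfold displacement in *. lra. Qed.

Lemma displacement_T_lt x : T x <> x -> displacement (T x) < displacement x.
Proof.
  intro Hx. pose proof (kannan_strict _ _ (not_eq_sym Hx)).
  unfold displacement. lra.
Qed.

Lemma fixed_point_unique z w : T z = z -> T w = w -> z = w.
Proof.
  intros Hz Hw. apply NNPP. intro Hzw. pose proof (kannan_strict _ _ Hzw) as H.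
  rewrite Hz, Hw, !(dist_refl metric_d) in H. pose proof (dist_ge0 metric_d z w). lra.
Qed.

Lemma limit_of_approx_fixed_is_fixed (u : nat -> X) z :
  seq_converges_to d u z -> Un_cv (fun n => displacement (u n)) 0 -> T z = z.
Proof.
  intros Hu Hdisp.
  assert (Hbound : forall n, displacement z <= 2 * d (u n) z + 3 * displacement (u n)).
  { intro n. pose proof (kannan_le (u n) z) as Hk.
    pose proof (dist_triangle metric_d z (u n) (T z)).
    pose proof (dist_triangle metric_d (u n) (T (u n)) (T z)).
    rewrite (dist_sym metric_d z (u n)) in *. unfold displacement in *. lra. }
  apply (dist_eq0 metric_d). rewrite (dist_sym metric_d). change (displacement z = 0).
  apply Rle_antisym; [|apply displacement_ge0]. apply Rnot_lt_le. intro Hpos.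
  destruct (Hu (displacement z / 4) ltac:(lra)) as [N1 HN1].
  destruct (Un_cv0_eventually_lt Hdisp (displacement z / 12) ltac:(lra)) as [N2 HN2].
  specialize (Hbound (N1 + N2)%nat).
  specialize (HN1 (N1 + N2)%nat ltac:(lia)). specialize (HN2 (N1 + N2)%nat ltac:(lia)).
  simpl in HN2. lra.
Qed.

Hypothesis kannan_uniform : forall eps, 0 < eps -> exists delta, 0 < delta /\
  forall x y, (d x (T x) + d y (T y)) / 2 < eps + delta -> d (T x) (T y) <= eps.

Lemma orbit_displacement_cv0 x : Un_cv (fun n => displacement (orbit x n)) 0.
Proof.
  set (a n := displacement (orbit x n)).
  assert (Hdec : Un_decreasing a) by (intro n; apply displacement_T_le).
  assert (Hlb : has_lb a).
  { exists 0. intros r [i ->]. unfold opp_seq. pose proof (displacement_ge0 (orbit x i)).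
    unfold a. lra. }
  destruct (decreasing_cv a Hdec Hlb) as [l Hl].
  pose proof (decreasing_ineq a l Hdec Hl) as Hge.
  enough (l = 0) by (subst l; exact Hl).
  apply Rle_antisym.
  2:{ apply Rnot_lt_le. intro Hneg. destruct (Hl (- l) ltac:(lra)) as [N HN].
      specialize (HN N (le_n N)). unfold Rdist in HN. apply Rabs_def2 in HN.
      pose proof (displacement_ge0 (orbit x N)). unfold a in HN. lra. }
  apply Rnot_lt_le. intro Hl0.
  destruct (kannan_uniform l Hl0) as [delta [Hdelta Hunif]].
  destruct (Hl delta Hdelta) as [N HN]. specialize (HN N (le_n N)).
  unfold Rdist in HN. apply Rabs_def2 in HN.
  assert (Hpinned : a (S N) <= l).
  { apply (Hunif (orbit x N) (orbit x (S N))).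
    pose proof (Hdec N). unfold a, displacement in *. lra. }
  assert (Hmoves : T (orbit x (S N)) <> orbit x (S N)).
  { intro E. pose proof (Hge (S N)) as H. unfold a, displacement in H.
    rewrite E, (dist_refl metric_d) in H. lra. }
  pose proof (displacement_T_lt _ Hmoves) as Hdrop.
  change (a (S (S N)) < a (S N)) in Hdrop. pose proof (Hge (S (S N))). lra.
Qed.

Lemma orbit_cauchy x : cauchy_seq d (orbit x).
Proof.
  intros eps Heps. destruct (kannan_uniform (eps / 2) ltac:(lra)) as [delta [Hdelta Hunif]].
  destruct (Un_cv0_eventually_lt (orbit_displacement_cv0 x) (eps / 2) ltac:(lra))
    as [N HN].
  exists (S N). intros m n Hm Hn.
  destruct m as [|m]; [lia|]. destruct n as [|n]; [lia|].
  assert (d (T (orbit x m)) (T (orbit x n)) <= eps / 2); [|rewrite !orbit_S; lra].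
  apply Hunif. pose proof (HN m ltac:(lia)). pose proof (HN n ltac:(lia)).
  unfold displacement in *. lra.
Qed.

End KannanMap.

Theorem theorem2p1 (X : Type) (x0 : X) (d : X -> X -> R)
  (Hmetric : is_metric d) (Hcomplete : complete_metric d) (T : X -> X)
  (Hi : forall eps, 0 < eps -> exists delta, 0 < delta /\
          forall x y, (d x (T x) + d y (T y)) / 2 < eps + delta ->
                      d (T x) (T y) <= eps)
  (Hii : forall x y, x <> y -> d (T x) (T y) < (d x (T x) + d y (T y)) / 2) :
  exists! x : X, T x = x.
Proof.
  destruct (Hcomplete _ (orbit_cauchy Hmetric Hii Hi x0)) as [z Hz].
  pose proof (orbit_displacement_cv0 Hmetric Hii Hi x0) as Hdisp.
  pose proof (limit_of_approx_fixed_is_fixed Hmetric Hii _ _ Hz Hdisp) as Hfix.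
  exists z. split; [exact Hfix|].
  intros w Hw. exact (fixed_point_unique Hmetric Hii _ _ Hfix Hw).
Qed.
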